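(* Let $\mathcal G$ be a core network with input nodes $\iota_1,\dots,\iota_n$ and output node $o$, and let $\rho_k>\rho_{k+1}$ be two adjacent absolutely super-simple nodes. Then: (a) $\rho_k$ and $\rho_{k+1}$ are adjacent $\iota_m$-super-simple nodes, for every $m=1,\dots,n$; (b) for every $m=1,\dots,n$, every $\iota_m$-simple node in $\mathcal L_m(\rho_k,\rho_{k+1})$ is an absolutely simple node; (c) $\mathcal L_m(\rho_k,\rho_{k+1})=\mathcal L(\rho_k,\rho_{k+1})$ for every $m=1,\dots,n$.
   Context: Node $b$ is downstream from $a$ if there is a directed path from $a$ to $b$. A core network: every node is upstream from $o$ and downstream from at least one input node. A simple path visits each node at most once; an $\iota_mo$-simple path is a simple path from $\iota_m$ to $o$. A node is $\iota_m$-simple if it lies on an $\iota_mo$-simple path; absolutely simple if $\iota_m$-simple for every $m$. An $\iota_m$-super-simple node is an $\iota_m$-simple node lying on every $\iota_mo$-simple path; the $\iota_m$-super-simple nodes appear in the same order on every $\iota_mo$-simple path, and two of them are adjacent $\iota_m$-super-simple nodes if they are consecutive in this order. A node is absolutely super-simple if it lies on every $\iota_mo$-simple path for every $m$; these are totally ordered $\rho_1>\cdots>\rho_p>o$, where $a>b$ means $b$ comes after $a$ on every $\iota_mo$-simple path for every $m$, and $\rho_k,\rho_{k+1}$ are adjacent if consecutive in this order. For adjacent $\iota_m$-super-simple nodes $\rho_k>\rho_{k+1}$, an $\iota_m$-simple node $\rho$ is between them if some $\iota_mo$-simple path visits $\rho_k,\rho,\rho_{k+1}$ in that order; $\mathcal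 L_m(\rho_k,\rho_{k+1})$ is the subnetwork of $\iota_m$-simple nodes between $\rho_k$ and $\rho_{k+1}$, with the arrows of $\mathcal G_m$ (the subnetwork of nodes downstream from $\iota_m$ and upstream from $o$) connecting them. For adjacent absolutely super-simple nodes, an absolutely simple node $\rho$ is between them if for some $m$ some $\iota_mo$-simple path visits $\rho_k,\rho,\rho_{k+1}$ in that order; $\mathcal L(\rho_k,\rho_{k+1})$ is the subnetwork of absolutely simple nodes between them, with arrows of $\mathcal G$ connecting them. *)

From mathcomp Require Import all_boot.
Set Implicit Arguments. Unset Strict Implicit. Unset Printing Implicit Defensive.

Section Network.
Variables (T : finType) (e : rel T) (n : nat) (iota : 'I_n -> T) (o : T).

(* x is upstream from y / y downstream from x: directed path x -> y *)
Definition downstream (x y : T) : bool := connect e x y.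

Definition core_network : Prop :=
  forall x, downstream x o /\ exists m, downstream (iota m) x.

(* A simple path from a to b, with vertex list a :: s. *)
Definition simple_path (a b : T) (s : seq T) : bool :=
  [&& path e a s, last a s == b & uniq (a :: s)].

Definition io_path (m : 'I_n) (s : seq T) : bool := simple_path (iota m) o s.

Definition m_simple (m : 'I_n) (x : T) : Prop :=
  exists s, io_path m s /\ x \in iota m :: s.

Definition abs_simple (x : T) : Prop := forall m, m_simple m x.

Definition m_super_simple (m : 'I_n) (x : T) : Prop :=
  m_simple m x /\ forall s, io_path m s -> x \in iota m :: s.

Definition abs_super_simple (x : T) : Prop :=
  forall m s, io_path m s -> x \in iota m :: s.

Definition m_before (m : 'I_n) (a b : T) : Prop :=
  forall s, io_path m s ->
    [/\ a \in iota m :: s, b \in iota m :: s &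
        index a (iota m :: s) < index b (iota m :: s)].

(* a > b : b comes after a on every iota_m o-simple path, for every m *)
Definition abs_before (a b : T) : Prop := forall m, m_before m a b.

Definition m_adjacent (m : 'I_n) (a b : T) : Prop :=
  [/\ m_super_simple m a, m_super_simple m b, m_before m a b &
      ~ exists c, [/\ m_super_simple m c, m_before m a c & m_before m c b]].

Definition abs_adjacent (a b : T) : Prop :=
  [/\ abs_super_simple a, abs_super_simple b, abs_before a b &
      ~ exists c, [/\ abs_super_simple c, abs_before a c & abs_before c b]].

Definition visits_between (m : 'I_n) (a x b : T) : Prop :=
  exists s, [/\ io_path m s, a \in iota m :: s, x \in iota m :: s,
    b \in iota m :: s &
    index a (iota m :: s) <= index x (iota m :: s) <= index b (iota m :: s)].

Definition m_between (m : 'I_n) (a b x : T) : Prop :=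
  m_simple m x /\ visits_between m a x b.

Definition abs_between (a b x : T) : Prop :=
  abs_simple x /\ exists m, visits_between m a x b.

Definition Gm_node (m : 'I_n) (x : T) : bool :=
  downstream (iota m) x && downstream x o.

Definition Lm_node (m : 'I_n) (a b x : T) : Prop := m_between m a b x.
Definition Lm_arrow (m : 'I_n) (a b x y : T) : Prop :=
  [/\ m_between m a b x, m_between m a b y, Gm_node m x, Gm_node m y & e x y].

Definition L_node (a b x : T) : Prop := abs_between a b x.
Definition L_arrow (a b x y : T) : Prop :=
  [/\ abs_between a b x, abs_between a b y & e x y].

End Network.

(* If c lies on every iota_i o-simple path, it lies on every walk from iota_i
   to o, since a walk shortens to a simple path.  Given simple paths P (from
   iota_i) and Q (from iota_j), both visiting a before b, replace the stretch
   of P between a and b by that of Q.  The result is again simple: a node of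
   Q's stretch lying on P before a (resp. after b) would give a walk from
   iota_i to o avoiding a (resp. b).  So a node between a and b for one input
   is between them for every input, which gives (b) and (c).  For (a), an
   iota_m-super-simple node c strictly between a and b lies on the a-b stretch
   of every simple path P, for otherwise the iota_m-path with its stretch
   replaced by P's would be a walk avoiding c; so c would be absolutely
   super-simple, contradicting adjacency. *)

From mathcomp Require Import all_boot.
Set Implicit Arguments. Unset Strict Implicit. Unset Printing Implicit Defensive.

Section Segments.
Variable T : eqType.
Implicit Types (p s : seq T) (x y u v : T).

(* The stretch of p from u to v without its first vertex u. *)
Definition seg p u v := take (index v p - index u p) (drop (index u p).+1 p).

Lemma eqn_index p u y : u \in p -> (index y p == index u p) = (y == u).
Proof.
move=> up; have [yp | yNp] := boolP (y \in p).
  by apply/eqP/eqP => [/index_inj -> // | ->].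
rewrite (memNindex yNp); apply/eqP/eqP => [eq_idx | yu]; last by rewrite yu up in yNp.
by rewrite -index_mem -eq_idx ltnn in up.
Qed.

Lemma index_leq_mem p x y : y \in p -> index x p <= index y p -> x \in p.
Proof. by rewrite -!index_mem => ys /leq_ltn_trans; apply. Qed.

Lemma index_ltn p x y : y \in p -> x != y -> index x p <= index y p -> index x p < index y p.
Proof. by move=> yp xy; rewrite ltn_neqAle eqn_index // xy. Qed.

Lemma take_seg p u v : index u p <= index v p ->
  take (index v p).+1 p = take (index u p).+1 p ++ seg p u v.
Proof. by move=> uv; rewrite /seg -takeD addSn subnKC. Qed.

Lemma last_take_index x s u : u \in x :: s -> last x (take (index u (x :: s)) s) = u.
Proof.
move=> us; rewrite -[last x _]/(last x (take (index u (x :: s)).+1 (x :: s))).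
by rewrite (take_nth x) ?index_mem // last_rcons nth_index.
Qed.

Lemma mem_seg p u v y : uniq p -> v \in p ->
  (y \in seg p u v) = (index u p < index y p <= index v p).
Proof.
move=> up vp; have [uv | vu] := leqP (index u p) (index v p); last first.
  rewrite /seg (eqP (ltnW vu)) take0 in_nil.
  by apply/esym/negP => /andP[/ltnW uy /leq_ltn_trans/(_ vu)]; rewrite ltnNge uy.
have lt_size k : k <= index v p -> k < size p by move/leq_ltn_trans; apply; rewrite index_mem.
have := take_uniq (index v p).+1 up; rewrite (take_seg uv) cat_uniq => /and3P[_ disj _].
have := in_take_leq y (lt_size _ (leqnn _)); rewrite (take_seg uv) mem_cat ltnS => in_v.
have := in_take_leq y (lt_size _ uv); rewrite ltnS => in_u.
apply/idP/idP => [y_seg | /andP[ltuy]].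
  have yv : index y p <= index v p by rewrite -in_v y_seg orbT.
  by have := hasPn disj y y_seg; rewrite in_u -ltnNge yv andbT.
by rewrite -in_v in_u leqNgt ltuy.
Qed.

Lemma mem_cons_seg p u v y : uniq p -> u \in p -> v \in p -> index u p <= index v p ->
  (y \in u :: seg p u v) = (index u p <= index y p <= index v p).
Proof.
move=> up u_p v_p uv; rewrite in_cons mem_seg // [index u p <= _]leq_eqVlt.
by rewrite [index u p == _]eq_sym eqn_index //; case: eqP => [-> | _]; rewrite ?uv.
Qed.

Lemma seg_sub p u v : {subset seg p u v <= p}.
Proof. by move=> y /mem_take /mem_drop. Qed.

Lemma seg_uniq p u v : uniq p -> uniq (seg p u v).
Proof. by move=> up; rewrite take_uniq // drop_uniq. Qed.

Lemma cons_seg_uniq p u v : uniq p -> v \in p -> uniq (u :: seg p u v).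
Proof. by move=> up vp; rewrite /= mem_seg // ltnn seg_uniq. Qed.

Lemma mem_head_seg x s u y : uniq (x :: s) -> u \in x :: s ->
  (y \in x :: seg (x :: s) x u) = (index y (x :: s) <= index u (x :: s)).
Proof. by move=> xs us; rewrite mem_cons_seg ?mem_head ?index_head. Qed.

Lemma seg_cat x s1 s2 s3 u v : uniq (x :: s1 ++ s2 ++ s3) ->
  last x s1 = u -> last u s2 = v -> seg (x :: s1 ++ s2 ++ s3) u v = s2.
Proof.
rewrite -cat_cons catA => uniq_s lu lv.
have uniq12 := subseq_uniq (prefix_subseq _ _) uniq_s.
have uniq1 := subseq_uniq (prefix_subseq _ _) uniq12.
have iu : index u (((x :: s1) ++ s2) ++ s3) = size s1.
  by rewrite -catA index_cat -lu mem_last index_last.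
have iv : index v (((x :: s1) ++ s2) ++ s3) = size s1 + size s2.
  by rewrite index_cat -lv -lu -last_cat mem_last index_last // size_cat.
rewrite /seg iu iv addKn -[(size s1).+1]/(size (x :: s1)) -catA.
by rewrite drop_size_cat // take_size_cat.
Qed.

End Segments.

Section Walks.
Variables (T : eqType) (e : rel T).
Implicit Types (s w : seq T) (x y z u v : T).

Definition walk x y w := path e x w && (last x w == y).

Lemma walk_cat x y z w1 w2 : walk x y w1 -> walk y z w2 -> walk x z (w1 ++ w2).
Proof. by rewrite /walk cat_path last_cat => /andP[-> /eqP->]. Qed.

Lemma walk_seg x s u v : path e x s -> u \in x :: s -> v \in x :: s ->
  index u (x :: s) <= index v (x :: s) -> walk u v (seg (x :: s) u v).
Proof.
move=> xs us vs uv.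
have [take_v] : x :: take (index v (x :: s)) s =
  x :: take (index u (x :: s)) s ++ seg (x :: s) u v := take_seg uv.
have := take_path (index v (x :: s)) xs; have := last_take_index vs.
by rewrite /walk take_v cat_path last_cat last_take_index // => -> /andP[_ ->]; rewrite eqxx.
Qed.

End Walks.

Section Network.
Variables (T : finType) (e : rel T) (n : nat) (iota : 'I_n -> T) (o : T).
Local Notation io_path := (io_path e iota o).
Local Notation m_before := (m_before e iota o).
Local Notation visits_between := (visits_between e iota o).

Lemma io_pathE m s : io_path m s = walk e (iota m) o s && uniq (iota m :: s).
Proof. by rewrite /walk -andbA. Qed.

Lemma walk_downstream x y w : walk e x y w -> downstream e x y.
Proof. by case/andP=> pth /eqP lst; apply/connectP; exists w. Qed.

Lemma exists_io_path m : core_network e iota o -> exists s, io_path m s.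
Proof.
move=> core; have [/connectP[p pth lst] _] := core (iota m).
case: (shortenP pth) lst => s s_path s_uniq _ lst.
by exists s; rewrite io_pathE /walk s_path -lst eqxx.
Qed.

Lemma mem_walk_super_simple m c w :
  (forall s, io_path m s -> c \in iota m :: s) -> walk e (iota m) o w -> c \in iota m :: w.
Proof.
move=> c_on /andP[pth /eqP]; case: (shortenP pth) => s s_path s_uniq s_sub lst.
have := c_on s; rewrite io_pathE /walk s_path lst eqxx s_uniq => /(_ isT).
by rewrite !in_cons => /orP[-> // | /s_sub ->]; rewrite orbT.
Qed.

Lemma m_simple_Gm_node m x : m_simple e iota o m x -> Gm_node e iota o m x.
Proof.
case=> s []; rewrite io_pathE => /andP[/andP[pth /eqP lst] uniq_s] xs.
have os : o \in iota m :: s by rewrite -lst mem_last.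
have xo : index x (iota m :: s) <= index o (iota m :: s).
  by rewrite -lst index_last // -ltnS index_mem.
apply/andP; split; apply: walk_downstream.
  by apply: walk_seg pth (mem_head _ _) xs _; rewrite index_head.
exact: walk_seg pth xs os xo.
Qed.

(* The detour runs along P to u, along Q from u to v, and along P from v to o. *)
Lemma super_simple_detour i j c P Q u v :
  (forall s, io_path i s -> c \in iota i :: s) -> io_path i P -> io_path j Q ->
  u \in iota i :: P -> v \in iota i :: P -> u \in iota j :: Q -> v \in iota j :: Q ->
  index u (iota j :: Q) <= index v (iota j :: Q) ->
  [|| index c (iota i :: P) <= index u (iota i :: P),
      index u (iota j :: Q) < index c (iota j :: Q) <= index v (iota j :: Q) |
      index v (iota i :: P) < index c (iota i :: P)].
Proof.
move=> c_on HP HQ uP vP uQ vQ uv.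
move: HP HQ; rewrite !io_pathE.
move=> /andP[/andP[pathP /eqP lastP] uniqP] /andP[/andP[pathQ _] uniqQ].
have oP : o \in iota i :: P by rewrite -lastP mem_last.
have vo : index v (iota i :: P) <= index o (iota i :: P).
  by rewrite -lastP index_last // -ltnS index_mem.
have detour : walk e (iota i) o (seg (iota i :: P) (iota i) u ++
    seg (iota j :: Q) u v ++ seg (iota i :: P) v o).
  apply: walk_cat (walk_seg pathP (mem_head _ _) uP _) _; first by rewrite index_head.
  exact: walk_cat (walk_seg pathQ uQ vQ uv) (walk_seg pathP vP oP vo).
have := mem_walk_super_simple c_on detour.
rewrite -cat_cons !mem_cat mem_head_seg // !mem_seg //.
by case/or3P=> [-> | -> | /andP[-> _]]; rewrite ?orbT.
Qed.

Lemma m_before_transfer j m a b c :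
  (exists s, io_path m s) -> m_before j a b -> m_before m a c -> m_before m c b ->
  m_before j a c /\ m_before j c b.
Proof.
move=> [Q HQ] ab_j ac_m cb_m.
have c_on s : io_path m s -> c \in iota m :: s by move/ac_m=> [].
suff c_mid P : io_path j P -> [/\ c \in iota j :: P,
    index a (iota j :: P) < index c (iota j :: P) &
    index c (iota j :: P) < index b (iota j :: P)].
  by split=> P HP; have [aP bP _] := ab_j P HP; have [cP ? ?] := c_mid P HP.
move=> HP; have [aP bP abP] := ab_j P HP.
have [aQ cQ acQ] := ac_m Q HQ; have [_ bQ cbQ] := cb_m Q HQ.
have /andP[acP cbP] : index a (iota j :: P) < index c (iota j :: P) <= index b (iota j :: P).
  case/or3P: (super_simple_detour c_on HQ HP aQ bQ aP bP (ltnW abP)) => // [ca | bc].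
    by rewrite leqNgt acQ in ca.
  by rewrite ltnNge (ltnW cbQ) in bc.
have cP := index_leq_mem bP cbP; split=> //; apply: index_ltn bP _ cbP.
by apply: contraTneq cbQ => ->; rewrite ltnn.
Qed.

Lemma splice_disjoint_head i j a b P Q u :
  m_before i a b -> io_path i P -> io_path j Q -> b \in iota j :: Q ->
  u \in seg (iota j :: Q) a b -> u \notin iota i :: seg (iota i :: P) (iota i) a.
Proof.
move=> ab_i HP HQ bQ; have [aP bP abP] := ab_i P HP.
have a_on s : io_path i s -> a \in iota i :: s by move/ab_i=> [].
move: (HP) (HQ); rewrite !io_pathE => /andP[_ uniqP] /andP[_ uniqQ].
rewrite mem_seg // mem_head_seg // => /andP[au ub]; apply/negP => ua.
have uP := index_leq_mem aP ua; have uQ := index_leq_mem bQ ub.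
have {}ua : index u (iota i :: P) < index a (iota i :: P).
  by apply: index_ltn aP _ ua; apply: contraTneq au => ->; rewrite ltnn.
case/or3P: (super_simple_detour a_on HP HQ uP bP uQ bQ ub) => [au' | /andP[ua' _] | ba].
- by rewrite leqNgt ua in au'.
- by rewrite ltnNge (ltnW au) in ua'.
- by rewrite ltnNge (ltnW abP) in ba.
Qed.

Lemma splice_disjoint_tail i j a b P Q u :
  m_before i a b -> io_path i P -> io_path j Q -> a \in iota j :: Q -> b \in iota j :: Q ->
  u \in seg (iota j :: Q) a b -> u \notin seg (iota i :: P) b o.
Proof.
move=> ab_i HP HQ aQ bQ; have [aP bP abP] := ab_i P HP.
have b_on s : io_path i s -> b \in iota i :: s by move/ab_i=> [].
move: (HP) (HQ); rewrite !io_pathE => /andP[/andP[_ /eqP lastP] uniqP] /andP[_ uniqQ].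
have oP : o \in iota i :: P by rewrite -lastP mem_last.
rewrite !mem_seg // => /andP[au ub]; apply/negP => /andP[bu uo].
have uP := index_leq_mem oP uo; have uQ := index_leq_mem bQ ub.
have {}ub : index u (iota j :: Q) < index b (iota j :: Q).
  by apply: index_ltn bQ _ ub; apply: contraTneq bu => ->; rewrite ltnn.
case/or3P: (super_simple_detour b_on HP HQ aP uP aQ uQ (ltnW au)) => [ba | /andP[_ bu'] | ub'].
- by rewrite leqNgt abP in ba.
- by rewrite leqNgt ub in bu'.
- by rewrite ltnNge (ltnW bu) in ub'.
Qed.

Lemma splice_io_path i j a b P Q :
  m_before i a b -> m_before j a b -> io_path i P -> io_path j Q ->
  io_path i (seg (iota i :: P) (iota i) a ++ seg (iota j :: Q) a b ++
             seg (iota i :: P) b o).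
Proof.
move=> ab_i ab_j HP HQ; have [aP bP abP] := ab_i P HP; have [aQ bQ abQ] := ab_j Q HQ.
move: (HP) (HQ); rewrite !io_pathE.
move=> /andP[/andP[pathP /eqP lastP] uniqP] /andP[/andP[pathQ _] uniqQ].
have oP : o \in iota i :: P by rewrite -lastP mem_last.
have bo : index b (iota i :: P) <= index o (iota i :: P).
  by rewrite -lastP index_last // -ltnS index_mem.
apply/andP; split.
  apply: walk_cat (walk_seg pathP (mem_head _ _) aP _) _; first by rewrite index_head.
  exact: walk_cat (walk_seg pathQ aQ bQ (ltnW abQ)) (walk_seg pathP bP oP bo).
rewrite -cat_cons cat_uniq cons_seg_uniq //= cat_uniq !seg_uniq // andbT.
apply/andP; split.
  apply/hasPn => y; rewrite mem_cat => /orP[/(splice_disjoint_head ab_i HP HQ bQ) // | ].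
  by rewrite mem_head_seg // mem_seg // -ltnNge => /andP[b_y _]; apply: ltn_trans abP b_y.
apply/hasPn => y y_tail; apply/negP => /(splice_disjoint_tail ab_i HP HQ aQ bQ).
by rewrite y_tail.
Qed.

Lemma visits_between_transfer i j a b x :
  (exists s, io_path i s) -> m_before i a b -> m_before j a b ->
  visits_between j a x b -> visits_between i a x b.
Proof.
move=> [P HP] ab_i ab_j [Q [HQ aQ xQ bQ axb]].
have [aP _ _] := ab_i P HP; have [_ _ abQ] := ab_j Q HQ.
have HN := splice_io_path ab_i ab_j HP HQ.
set N := _ ++ _ ++ _ in HN.
move: (HP) (HQ) (HN); rewrite !io_pathE.
move=> /andP[/andP[pathP _] uniqP] /andP[/andP[pathQ _] uniqQ] /andP[_ uniqN].
have /andP[_ /eqP last_head] : walk e (iota i) a (seg (iota i :: P) (iota i) a).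
  by apply: walk_seg; rewrite ?mem_head ?index_head.
have /andP[_ /eqP last_mid] := walk_seg pathQ aQ bQ (ltnW abQ).
have segN := seg_cat uniqN last_head last_mid.
have aN : a \in iota i :: N by rewrite -cat_cons mem_cat mem_head_seg // leqnn.
have b_seg : b \in seg (iota i :: N) a b by rewrite segN mem_seg // abQ leqnn.
have bN := seg_sub b_seg.
have /andP[/ltnW abN _] : index a (iota i :: N) < index b (iota i :: N) <= index b (iota i :: N).
  by rewrite -mem_seg.
have x_seg : x \in a :: seg (iota i :: N) a b by rewrite segN mem_cons_seg // ltnW.
rewrite mem_cons_seg // in x_seg.
by exists N; split=> //; apply: index_leq_mem bN _; case/andP: x_seg.
Qed.

End Network.

Theorem lemma3p21 (T : finType) (e : rel T) (n : nat) (iota : 'I_n -> T) (o : T)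
  (Hinj : injective iota) (Ho : forall m, iota m != o)
  (Hcore : core_network e iota o)
  (a b : T) (Hab : abs_adjacent e iota o a b) :
  (forall m, m_adjacent e iota o m a b) /\
  (forall m x, m_simple e iota o m x -> Lm_node e iota o m a b x ->
     abs_simple e iota o x) /\
  (forall m, (forall x, Lm_node e iota o m a b x <-> L_node e iota o a b x) /\
             (forall x y, Lm_arrow e iota o m a b x y <-> L_arrow e iota o a b x y)).
Proof.
have ex_path m := exists_io_path m Hcore.
case: Hab => a_on b_on ab no_between.
have super m c : abs_super_simple e iota o c -> m_super_simple e iota o m c.
  move=> c_on; split; last exact: c_on.
  by have [s Hs] := ex_path m; exists s; split=> //; exact: c_on Hs.
have transfer m x j : visits_between e iota o m a x b -> visits_between e iota o j a x b.
  exact: visits_between_transfer (ex_path j) (ab j) (ab m).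
have between_simple m x : visits_between e iota o m a x b -> abs_simple e iota o x.
  by move=> vis j; have [s [Hs _ xs _ _]] := transfer m x j vis; exists s.
have node m x : Lm_node e iota o m a b x <-> L_node e iota o a b x.
  split=> [[_ vis] | [x_simple [j vis]]]; first by split; [apply: between_simple vis | exists m].
  by split; [apply: x_simple | apply: transfer vis].
split; [|split].
- move=> m; split; [exact: super | exact: super | exact: ab |].
  case=> c [_ ac cb]; apply: no_between; exists c.
  have c_between j := m_before_transfer (ex_path m) (ab j) ac cb.
  by split=> [j s /(proj1 (c_between j))[] | j | j]; case: (c_between j).
- by move=> m x _ [_ /between_simple].
- move=> m; split=> // x y; split=> [[xL yL _ _ xy] | [xL yL xy]].
    by split=> //; apply/(node m).
  have [[x_simple _] [y_simple _]] := (proj2 (node m x) xL, proj2 (node m y) yL).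
  by split=> //; [apply/(node m) | apply/(node m) | apply: m_simple_Gm_node..].
Qed.
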